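(* Interpret programs in the Boolean semiring. For every program $C$ and all $P,Q\subseteq\Sigma$, the following are equivalent: (i) $\vDash\{\mathbf 1P\}\ C\ \{\Diamond Q\}$; (ii) $P\subseteq\langle C\rangle Q$; (iii) the Lisbon triple for $P$, $C$, $Q$ is valid.
   Context: Boolean semiring: $U=\{0,1\}$ with $+=\vee$, $\cdot=\wedge$, $\mathbf 0=0$, $\mathbf 1=1$. Weighting functions $\mathcal W(X)$ are maps $m:X\to\{0,1\}$ with countable support $\mathrm{supp}(m)=\{x:m(x)=1\}$, mass $|m|=\bigvee_{x\in\mathrm{supp}(m)}m(x)$, pointwise operations; $\eta(x)$ is the indicator of $\{x\}$ and $f^\dagger(m)(y)=\bigvee_{x\in\mathrm{supp}(m)}m(x)\wedge f(x)(y)$. Fix states $\Sigma$, atomic actions $\mathsf{Act}$ with $[\![a]\!]_{\mathsf{Act}}:\Sigma\to\mathcal W(\Sigma)$, primitive tests $\mathsf{Test}\subseteq 2^\Sigma$. Programs $C::=\mathsf{skip}\mid C_1;C_2\mid C_1+C_2\mid\mathsf{assume}\ e\mid C^{\langle e,e'\rangle}\mid a$, $e::=b\mid u$ ($u\in\{0,1\}$), tests $b$ Boolean combinations of $\mathsf{true},\mathsf{false}$ and primitive tests $t$ (with $[\![t]\!](\sigma)=1$ iff $\sigma\in t$), $[\![u]\!](\sigma)=u$. Semantics: $[\![\mathsf{skip}]\!](\sigma)=\eta(\sigma)$; $[\![C_1;C_2]\!](\sigma)=[\![C_2]\!]^\dagger([\![C_1]\!](\sigma))$; $[\![C_1+C_2]\!](\sigma)=[\![C_1]\!](\sigma)+[\![C_2]\!](\sigma)$;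 $[\![a]\!]=[\![a]\!]_{\mathsf{Act}}$; $[\![\mathsf{assume}\ e]\!](\sigma)=[\![e]\!](\sigma)\cdot\eta(\sigma)$; $[\![C^{\langle e,e'\rangle}]\!]$ is the least fixed point (pointwise order) of $\Phi(f)(\sigma)=[\![e]\!](\sigma)\cdot f^\dagger([\![C]\!](\sigma))+[\![e']\!](\sigma)\cdot\eta(\sigma)$. Assertions are subsets of $\mathcal W(\Sigma)$; $\vDash\{\varphi\}C\{\psi\}$ iff $[\![C]\!]^\dagger(m)\in\psi$ for all $m\in\varphi$. For $P\subseteq\Sigma$: $\mathbf 1P=\{m:|m|=\mathbf 1,\ \mathrm{supp}(m)\subseteq P\}$ and $\Diamond Q=\{m:\mathrm{supp}(m)\cap Q\ne\emptyset\}$. $\langle C\rangle Q=\{\sigma\in\Sigma:\mathrm{supp}([\![C]\!](\sigma))\cap Q\neq\emptyset\}$. The Lisbon triple for $P,C,Q$ is valid iff for every $\sigma\in P$ there exists $\tau\in\mathrm{supp}([\![C]\!](\sigma))$ with $\tau\in Q$. *)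

From mathcomp Require Import all_boot.
From mathcomp Require Import boolp classical_sets cardinality.
Set Implicit Arguments. Unset Strict Implicit. Unset Printing Implicit Defensive.
Local Open Scope classical_set_scope.

Section Lang.
Variables (Sigma Act Tst : Type).

(* Boolean semiring {0,1} with + = || , . = && ; weights are maps Sigma -> bool *)
Definition supp (m : Sigma -> bool) : set Sigma := [set x | m x].
Definition is_weighting (m : Sigma -> bool) : Prop := countable (supp m).
Definition mass (m : Sigma -> bool) : bool := `[< exists x, m x >].
Definition eta (s : Sigma) : Sigma -> bool := fun t => `[< t = s >].
Definition bind (f : Sigma -> Sigma -> bool) (m : Sigma -> bool) : Sigma -> bool :=
  fun y => `[< exists x, m x && f x y >].

Inductive test :=
  | TTrue | TFalse | TPrim of Tst | TNot of test
  | TAnd of test & test | TOr of test & test.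

Inductive expr := EBool of test | EConst of bool.

Inductive prog :=
  | Skip
  | Seq of prog & prog
  | Plus of prog & prog
  | Assume of expr
  | Iter of prog & expr & expr
  | Atom of Act.

Variables (testI : Tst -> set Sigma) (actI : Act -> Sigma -> Sigma -> bool).

Fixpoint evalT (b : test) (s : Sigma) : bool :=
  match b with
  | TTrue => true
  | TFalse => false
  | TPrim t => `[< testI t s >]
  | TNot b => ~~ evalT b s
  | TAnd b1 b2 => evalT b1 s && evalT b2 s
  | TOr b1 b2 => evalT b1 s || evalT b2 s
  end.

Definition evalE (e : expr) (s : Sigma) : bool :=
  match e with EBool b => evalT b s | EConst u => u end.

Definition Phi (g : Sigma -> Sigma -> bool) (e e' : expr)
    (f : Sigma -> Sigma -> bool) : Sigma -> Sigma -> bool :=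
  fun s t => (evalE e s && bind f (g s) t) || (evalE e' s && eta s t).

(* least fixed point in the pointwise order (Knaster--Tarski: meet of all
   prefixed points) *)
Definition lfp (F : (Sigma -> Sigma -> bool) -> (Sigma -> Sigma -> bool))
  : Sigma -> Sigma -> bool :=
  fun s t => `[< forall f : Sigma -> Sigma -> bool,
                   (forall s' t', F f s' t' -> f s' t') -> f s t >].

Fixpoint den (C : prog) : Sigma -> Sigma -> bool :=
  match C with
  | Skip => eta
  | Seq C1 C2 => fun s => bind (den C2) (den C1 s)
  | Plus C1 C2 => fun s t => den C1 s t || den C2 s t
  | Assume e => fun s t => evalE e s && eta s t
  | Iter C e e' => lfp (Phi (den C) e e')
  | Atom a => actI a
  end.

Definition OneP (P : set Sigma) : set (Sigma -> bool) :=
  [set m | is_weighting m /\ mass m = true /\ supp m `<=` P].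
Definition Dia (Q : set Sigma) : set (Sigma -> bool) :=
  [set m | is_weighting m /\ supp m `&` Q !=set0].

Definition valid (phi : set (Sigma -> bool)) (C : prog) (psi : set (Sigma -> bool)) :=
  forall m, phi m -> psi (bind (den C) m).

Definition dia_pre (C : prog) (Q : set Sigma) : set Sigma :=
  [set s | supp (den C s) `&` Q !=set0].

Definition lisbon (P : set Sigma) (C : prog) (Q : set Sigma) : Prop :=
  forall s, P s -> exists t, supp (den C s) t /\ Q t.

End Lang.

From mathcomp Require Import all_boot.
From mathcomp Require Import boolp classical_sets cardinality.
Set Implicit Arguments.
Unset Strict Implicit.
Local Open Scope classical_set_scope.

(* Over the Boolean semiring a weighting function is just a countable set of
   states and the Kleisli extension is relational image, so testing the
   triple (i) on the point masses [eta s] (which lie in [OneP P]) gives (ii),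
   and (ii) is (iii) unfolded.  The only real work is the converse (ii) -> (i):
   [Dia Q] also demands a countable support of the output, which holds because
   the output of an iteration from [s] stays among the states reachable from
   [s], a countable union over path lengths of countable sets. *)

Lemma subset_countable T (A B : set T) : A `<=` B -> countable B -> countable A.
Proof. by move=> /subset_card_le; apply: sub_countable. Qed.

Lemma countableU T (A B : set T) :
  countable A -> countable B -> countable (A `|` B).
Proof.
move=> cA cB; apply: (subset_countable (B := \bigcup_(b in [set: bool]) if b then A else B)).
  by move=> x [xA|xB]; [exists true|exists false].
by apply: bigcup_countable => [|[]]; first exact: countableP.
Qed.

Section Reachability.
Variables (Sigma : Type) (g : Sigma -> Sigma -> bool).

Fixpoint steps (n : nat) (s : Sigma) : set Sigma :=
  if n is n.+1 then \bigcup_(x in steps n s) supp (g x) else [set s].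

Definition reachable (s : Sigma) : set Sigma := \bigcup_(n in [set: nat]) steps n s.

Lemma reachable_refl s : reachable s s.
Proof. by exists 0. Qed.

Lemma steps_succ n s x : g s x -> steps n x `<=` steps n.+1 s.
Proof.
move=> gsx; elim: n => [|n IH] t /=; first by move->; exists s.
by move=> [y /IH sy gyt]; exists y.
Qed.

Lemma reachable_step s x : g s x -> reachable x `<=` reachable s.
Proof. by move=> gsx t [n _ xnt]; exists n.+1 => //; exact: steps_succ gsx _ xnt. Qed.

Hypothesis g_weighting : forall s, is_weighting (g s).

Lemma countable_steps n s : countable (steps n s).
Proof.
elim: n => [|n IH] /=; first exact: countable1.
by apply: bigcup_countable => // x _; exact: g_weighting.
Qed.

Lemma countable_reachable s : countable (reachable s).
Proof.
apply: bigcup_countable => [|n _]; first exact: countableP.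
exact: countable_steps.
Qed.

End Reachability.

Section Weights.
Variable Sigma : Type.
Implicit Types (f : Sigma -> Sigma -> bool) (m : Sigma -> bool) (s : Sigma).

Lemma supp_eta s : supp (eta s) = [set s].
Proof. by apply/seteqP; split=> t /=; [move/asboolP | move->; apply/asboolP]. Qed.

Lemma eta_weighting s : is_weighting (eta s).
Proof. by rewrite /is_weighting supp_eta; exact: countable1. Qed.

Lemma supp_bind f m : supp (bind f m) = \bigcup_(x in supp m) supp (f x).
Proof.
apply/seteqP; split=> t; first by move=> /asboolP[x /andP[mx fxt]]; exists x.
by move=> [x mx fxt]; apply/asboolP; exists x; apply/andP.
Qed.

Lemma bind_weighting f m :
  is_weighting m -> (forall x, supp m x -> is_weighting (f x)) ->
  is_weighting (bind f m).
Proof. by move=> mw fw; rewrite /is_weighting supp_bind; exact: bigcup_countable. Qed.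

Lemma bind_eta f s : bind f (eta s) = f s.
Proof.
apply/funext=> t; apply/asboolP/idP => [[x /andP[/asboolP-> //]] | fs_t].
by exists s; rewrite fs_t andbT; apply/asboolP.
Qed.

Lemma OneP_eta (P : set Sigma) s : P s -> OneP P (eta s).
Proof.
move=> Ps; split; first exact: eta_weighting.
split; last by rewrite supp_eta => t ->.
by apply/asboolP; exists s; apply/asboolP.
Qed.

Lemma lfp_least (F : (Sigma -> Sigma -> bool) -> Sigma -> Sigma -> bool) f :
  (forall s t, F f s t -> f s t) -> forall s t, lfp F s t -> f s t.
Proof. by move=> Ff s t /asboolP; apply. Qed.

Lemma supp_lfp_Phi (Tst : Type) (testI : Tst -> set Sigma) g (e e' : expr Tst) s :
  supp (lfp (Phi testI g e e') s) `<=` reachable g s.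
Proof.
move=> t /(lfp_least (f := fun s t => `[< reachable g s t >])) /asboolP; apply.
move=> {}s {}t /orP[/andP[_ /asboolP[x /andP[gsx /asboolP]]] | /andP[_ /asboolP->]].
  by move=> xt; apply/asboolP; exact: reachable_step xt.
by apply/asboolP; exact: reachable_refl.
Qed.

End Weights.

Section Triples.
Variables (Sigma Act Tst : Type).
Variables (testI : Tst -> set Sigma) (actI : Act -> Sigma -> Sigma -> bool).
Hypothesis actI_weighting : forall a s, is_weighting (actI a s).

Lemma den_weighting (C : prog Act Tst) s : is_weighting (den testI actI C s).
Proof.
elim: C s => [|C1 IH1 C2 IH2|C1 IH1 C2 IH2|e|C IH e e'|a] s /=.
- exact: eta_weighting.
- exact: bind_weighting.
- apply: (subset_countable (B := supp (den testI actI C1 s) `|` supp (den testI actI C2 s))).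
    by move=> t /orP[]; [left|right].
  exact: countableU (IH1 s) (IH2 s).
- by apply: subset_countable (eta_weighting s) => t /andP[].
- apply: subset_countable (countable_reachable IH s); exact: supp_lfp_Phi.
- exact: actI_weighting.
Qed.

Lemma valid_OneP_Dia (C : prog Act Tst) (P Q : set Sigma) :
  valid testI actI (OneP P) C (Dia Q) <-> P `<=` dia_pre testI actI C Q.
Proof.
split=> [V s Ps | pre m [mw [/asboolP[x mx] mP]]].
  by have [_] := V _ (OneP_eta Ps); rewrite bind_eta.
split; first by apply: bind_weighting => // y _; exact: den_weighting.
have [t [Cxt Qt]] := pre x (mP x mx).
by exists t; split=> //; rewrite supp_bind; exists x.
Qed.

End Triples.

Theorem theorem5p2 (Sigma Act Tst : Type)
  (testI : Tst -> set Sigma) (actI : Act -> Sigma -> Sigma -> bool)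
  (actI_weighting : forall a s, is_weighting (actI a s))
  (C : prog Act Tst) (P Q : set Sigma) :
  (valid testI actI (OneP P) C (Dia Q) <-> P `<=` dia_pre testI actI C Q) /\
  (P `<=` dia_pre testI actI C Q <-> lisbon testI actI P C Q).
Proof.
by split; first exact: valid_OneP_Dia.
Qed.
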